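(* (i) Let $\mathcal{C}$ be a category, $A,B$ objects of $\mathcal{C}$, and $L_1,L_2\subseteq\mathcal{C}(A,B)$ regular languages of arrows. Then $L_1\cap L_2$ is a regular language of arrows. (ii) Let $\mathcal{O}$ be an operad, $A$ a color of $\mathcal{O}$, and $L_1,L_2\subseteq\mathcal{O}(A)$ regular languages of constants. Then $L_1\cap L_2$ is a regular language of constants.
   Context: Composition in categories is written diagrammatically. Operads are colored, non-symmetric operads; $\mathcal{O}(A)$ is the set of constants (nullary operations) of color $A$. A functor of categories $p$ is ULF if for every arrow $\alpha$ and arrows $u,v$ with $p(\alpha)=uv$ there is a unique pair $\beta,\gamma$ with $\alpha=\beta\gamma$, $p(\beta)=u$, $p(\gamma)=v$; a functor of operads $p$ is ULF if for every operation $\alpha$ and operations $g,h$ and index $i$ with $p(\alpha)=g\circ_i h$ there is a unique pair $\beta,\gamma$ with $\alpha=\beta\circ_i\gamma$, $p(\beta)=g$, $p(\gamma)=h$. A functor is finitary if its fibers over every object/color and every arrow/operation are finite. A nondeterministic finite-state automaton over a category $\mathcal{C}$ is a tuple $(\mathcal{C},\mathcal{Q},p,q_0,q_f)$ with $p:\mathcal{Q}\to\mathcal{C}$ finitary ULF and $q_0,q_f$ objects of $\mathcal{Q}$, recognizing $\{p(\alpha)\mid\alpha:q_0\to q_f\}$; $L\subseteq\mathcal{C}(A,B)$ is a regular language of arrows if it is recognized by such an automaton with $p(q_0)=A$, $p(q_f)=B$. A nondeterministic finite-state automaton over an operad $\mathcal{O}$ is a tuple $(\mathcal{O},\mathcal{Q},p,q_r)$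 with $p:\mathcal{Q}\to\mathcal{O}$ a finitary ULF functor of operads and $q_r$ a color of $\mathcal{Q}$, recognizing $\{p(\alpha)\mid\alpha\in\mathcal{Q}(q_r)\}$; $L\subseteq\mathcal{O}(A)$ is a regular language of constants if it is recognized by such an automaton with $p(q_r)=A$. *)

(* Categories and coloured non-symmetric operads, presented
   with a type of objects/colours, a type of arrows/operations, source and
   target maps, and a total composition function that is only constrained
   on composable inputs. *)
From Stdlib Require Import List Arith.
Import ListNotations.

Set Implicit Arguments.
Unset Strict Implicit.

Definition finite_pred (X : Type) (P : X -> Prop) : Prop :=
  exists l : list X, forall x, P x -> In x l.

(** * Categories (composition written diagrammatically: comp f g = f;g) *)
Record Category := {
  Ob : Type;
  Ar : Type;
  dom : Ar -> Ob;
  cod : Ar -> Ob;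
  idA : Ob -> Ar;
  comp : Ar -> Ar -> Ar;
  dom_id : forall x, dom (idA x) = x;
  cod_id : forall x, cod (idA x) = x;
  dom_comp : forall f g, cod f = dom g -> dom (comp f g) = dom f;
  cod_comp : forall f g, cod f = dom g -> cod (comp f g) = cod g;
  comp_id_l : forall f, comp (idA (dom f)) f = f;
  comp_id_r : forall f, comp f (idA (cod f)) = f;
  comp_assoc : forall f g h, cod f = dom g -> cod g = dom h ->
      comp (comp f g) h = comp f (comp g h)
}.

Record Functor (C D : Category) := {
  fob : Ob C -> Ob D;
  far : Ar C -> Ar D;
  far_dom : forall f, dom (far f) = fob (dom f);
  far_cod : forall f, cod (far f) = fob (cod f);
  far_id : forall x, far (@idA C x) = @idA D (fob x);
  far_comp : forall f g, cod f = dom g -> far (comp f g) = comp (far f) (far g)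
}.

Definition ULF (C D : Category) (p : Functor C D) : Prop :=
  forall (a : Ar C) (u v : Ar D), cod u = dom v -> far p a = comp u v ->
    exists! bc : Ar C * Ar C,
      cod (fst bc) = dom (snd bc) /\ a = comp (fst bc) (snd bc) /\
      far p (fst bc) = u /\ far p (snd bc) = v.

Definition finitary (C D : Category) (p : Functor C D) : Prop :=
  (forall x : Ob D, finite_pred (fun q : Ob C => fob p q = x)) /\
  (forall f : Ar D, finite_pred (fun a : Ar C => far p a = f)).

Record cat_automaton (C : Category) := {
  aQ : Category;
  ap : Functor aQ C;
  ap_ulf : ULF ap;
  ap_fin : finitary ap;
  aq0 : Ob aQ;
  aqf : Ob aQ
}.

Definition cat_recognizes (C : Category) (M : cat_automaton C) (f : Ar C) : Prop :=
  exists a : Ar (aQ M), dom a = aq0 M /\ cod a = aqf M /\ far (ap M) a = f.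

Definition regular_arrows (C : Category) (A B : Ob C) (L : Ar C -> Prop) : Prop :=
  exists M : cat_automaton C,
    fob (ap M) (aq0 M) = A /\ fob (ap M) (aqf M) = B /\
    (forall f, L f <-> cat_recognizes M f).

(** * Coloured non-symmetric operads.
   An operation o has output colour [out o] and list of input colours [ins o];
   [ocomp g i h] is the partial composition g o_i h (inputs indexed from 0). *)
Definition ocomposable_gen (Col Op : Type) (out : Op -> Col) (ins : Op -> list Col)
  (g : Op) (i : nat) (h : Op) : Prop := nth_error (ins g) i = Some (out h).

Record Operad := {
  Col : Type;
  Op : Type;
  out : Op -> Col;
  ins : Op -> list Col;
  oid : Col -> Op;
  ocomp : Op -> nat -> Op -> Op;
  out_id : forall c, out (oid c) = c;
  ins_id : forall c, ins (oid c) = [c];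
  out_comp : forall g i h, ocomposable_gen out ins g i h ->
      out (ocomp g i h) = out g;
  ins_comp : forall g i h, ocomposable_gen out ins g i h ->
      ins (ocomp g i h) = firstn i (ins g) ++ ins h ++ skipn (S i) (ins g);
  ocomp_id_l : forall h, ocomp (oid (out h)) 0 h = h;
  ocomp_id_r : forall g i c, nth_error (ins g) i = Some c -> ocomp g i (oid c) = g;
  ocomp_assoc_seq : forall g i h j k,
      ocomposable_gen out ins g i h -> ocomposable_gen out ins h j k ->
      ocomp (ocomp g i h) (i + j) k = ocomp g i (ocomp h j k);
  ocomp_assoc_par : forall g i h j k, i < j ->
      ocomposable_gen out ins g i h -> ocomposable_gen out ins g j k ->
      ocomp (ocomp g j k) i h = ocomp (ocomp g i h) (j - 1 + length (ins h)) k
}.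

Definition ocomposable (O : Operad) (g : Op O) (i : nat) (h : Op O) : Prop :=
  ocomposable_gen (@out O) (@ins O) g i h.

Record OFunctor (O P : Operad) := {
  fcol : Col O -> Col P;
  fop : Op O -> Op P;
  fop_out : forall a, out (fop a) = fcol (out a);
  fop_ins : forall a, ins (fop a) = map fcol (ins a);
  fop_id : forall c, fop (@oid O c) = @oid P (fcol c);
  fop_comp : forall g i h, ocomposable g i h ->
      fop (ocomp g i h) = ocomp (fop g) i (fop h)
}.

Definition OULF (O P : Operad) (p : OFunctor O P) : Prop :=
  forall (a : Op O) (g h : Op P) (i : nat), ocomposable g i h ->
    fop p a = ocomp g i h ->
    exists! bc : Op O * Op O,
      ocomposable (fst bc) i (snd bc) /\ a = ocomp (fst bc) i (snd bc) /\
      fop p (fst bc) = g /\ fop p (snd bc) = h.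

Definition ofinitary (O P : Operad) (p : OFunctor O P) : Prop :=
  (forall c : Col P, finite_pred (fun q : Col O => fcol p q = c)) /\
  (forall f : Op P, finite_pred (fun a : Op O => fop p a = f)).

Record op_automaton (O : Operad) := {
  oQ : Operad;
  op : OFunctor oQ O;
  op_ulf : OULF op;
  op_fin : ofinitary op;
  oqr : Col oQ
}.

Definition is_constant (O : Operad) (c : Col O) (a : Op O) : Prop :=
  ins a = [] /\ out a = c.

Definition op_recognizes (O : Operad) (M : op_automaton O) (a : Op O) : Prop :=
  exists al : Op (oQ M), is_constant (oqr M) al /\ fop (op M) al = a.

Definition regular_constants (O : Operad) (A : Col O) (L : Op O -> Prop) : Prop :=
  exists M : op_automaton O,
    fcol (op M) (oqr M) = A /\ (forall a, L a <-> op_recognizes M a).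

(* The intersection is recognised by the product automaton: the pullback of
   the two projections p1 : Q1 -> C and p2 : Q2 -> C, whose objects (colours)
   and arrows (operations) are pairs with a common image.  A factorisation of
   the image of a pair lifts uniquely in each component, so the pair of lifts
   is the unique lift in the pullback; fibres of the pullback are subsets of
   products of fibres, hence finite.  A run of the product automaton is a pair
   of runs of M1 and M2 with the same image. *)

From Stdlib Require Import List Arith Lia ClassicalEpsilon ProofIrrelevance.
Import ListNotations.

Set Implicit Arguments.

Section ListCombine.
Variables A B : Type.

Lemma nth_error_combine (l1 : list A) (l2 : list B) i x y :
  nth_error (combine l1 l2) i = Some (x, y) <->
  nth_error l1 i = Some x /\ nth_error l2 i = Some y.
Proof.
  revert l1 l2; induction i as [|i IH]; intros [|a l1] [|b l2]; simpl;
    try (split; [discriminate | intros [H1 H2]; discriminate]); auto.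
  split; [intros H; injection H | intros [H1 H2]; injection H1; injection H2];
    intros; subst; auto.
Qed.

Lemma combine_skipn (l1 : list A) (l2 : list B) n :
  skipn n (combine l1 l2) = combine (skipn n l1) (skipn n l2).
Proof.
  revert l1 l2; induction n as [|n IH]; intros [|a l1] [|b l2]; simpl; auto.
  destruct (skipn n l1); auto.
Qed.

Lemma combine_app (l1 l1' : list A) (l2 l2' : list B) :
  length l1 = length l2 ->
  combine (l1 ++ l1') (l2 ++ l2') = combine l1 l2 ++ combine l1' l2'.
Proof.
  revert l2; induction l1 as [|a l1 IH]; intros [|b l2]; simpl; try discriminate; auto.
  intros H; f_equal; auto.
Qed.

Lemma map_fst_combine (l1 : list A) (l2 : list B) :
  length l1 = length l2 -> map fst (combine l1 l2) = l1.
Proof.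
  revert l2; induction l1 as [|a l1 IH]; intros [|b l2]; simpl; try discriminate; auto.
  intros H; f_equal; auto.
Qed.

End ListCombine.

Record fibre (A B X : Type) (f : A -> X) (g : B -> X) : Type :=
  Fibre { pr1 : A; pr2 : B; pr_eq : f pr1 = g pr2 }.

Arguments Fibre {A B X f g}.
Arguments pr1 {A B X f g}.
Arguments pr2 {A B X f g}.
Arguments pr_eq {A B X f g}.

Section Fibre.
Variables (A B X : Type) (f : A -> X) (g : B -> X).

Lemma fibre_ext (x y : fibre f g) : pr1 x = pr1 y -> pr2 x = pr2 y -> x = y.
Proof.
  destruct x as [a b h], y as [a' b' h']; simpl; intros <- <-.
  f_equal; apply proof_irrelevance.
Qed.

Definition fibre_pair (x : fibre f g) : A * B := (pr1 x, pr2 x).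

Lemma map_fibre_pair_inj (l l' : list (fibre f g)) :
  map fibre_pair l = map fibre_pair l' -> l = l'.
Proof.
  revert l'; induction l as [|x l IH]; intros [|y l']; simpl; try discriminate; auto.
  intros H; injection H; intros E E12 E11; f_equal; auto; apply fibre_ext; auto.
Qed.

Lemma map_pr1_fibre_pair (l : list (fibre f g)) : map pr1 l = map fst (map fibre_pair l).
Proof. rewrite map_map; reflexivity. Qed.

Lemma nth_error_map_fibre_pair (l : list (fibre f g)) i x :
  nth_error (map fibre_pair l) i = Some (fibre_pair x) <-> nth_error l i = Some x.
Proof.
  rewrite nth_error_map; destruct (nth_error l i) as [y|]; simpl; split; try discriminate.
  - intros H; injection H; intros E2 E1; f_equal; apply fibre_ext; auto.
  - intros H; injection H; intros ->; reflexivity.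
Qed.

(* Equality in X is not decidable, hence the classical test. *)
Definition sieve (l : list (A * B)) : list (fibre f g) :=
  flat_map (fun ab =>
    match excluded_middle_informative (f (fst ab) = g (snd ab)) with
    | left h => [Fibre (fst ab) (snd ab) h]
    | right _ => []
    end) l.

Lemma in_sieve (x : fibre f g) l : In (fibre_pair x) l -> In x (sieve l).
Proof.
  intros Hx; apply in_flat_map; exists (fibre_pair x); split; [exact Hx|]; simpl.
  destruct excluded_middle_informative as [h|h].
  - left; apply fibre_ext; reflexivity.
  - exact (h (pr_eq x)).
Qed.

Lemma map_fibre_pair_sieve_combine (l1 : list A) (l2 : list B) :
  map f l1 = map g l2 -> map fibre_pair (sieve (combine l1 l2)) = combine l1 l2.
Proof.
  revert l2; induction l1 as [|a l1 IH]; intros [|b l2]; simpl; try discriminate; auto.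
  intros H; injection H; intros E Eab.
  destruct excluded_middle_informative as [h|h]; [|contradiction].
  simpl; f_equal; auto.
Qed.

Lemma finite_fibre (x : X) :
  finite_pred (fun a => f a = x) -> finite_pred (fun b => g b = x) ->
  finite_pred (fun q : fibre f g => f (pr1 q) = x).
Proof.
  intros [l1 L1] [l2 L2]; exists (sieve (list_prod l1 l2)); intros q Hq.
  apply in_sieve, in_prod; [apply L1, Hq | apply L2; rewrite <- pr_eq; exact Hq].
Qed.

End Fibre.

Arguments fibre_pair {A B X f g}.

Section PullbackCategory.
Variables (C Q1 Q2 : Category) (p1 : Functor Q1 C) (p2 : Functor Q2 C).

Local Notation pb_ob := (fibre (fob p1) (fob p2)).
Local Notation pb_ar := (fibre (far p1) (far p2)).

Lemma far_dom_fibre (a : pb_ar) : fob p1 (dom (pr1 a)) = fob p2 (dom (pr2 a)).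
Proof. rewrite <- !far_dom, pr_eq; reflexivity. Qed.

Lemma far_cod_fibre (a : pb_ar) : fob p1 (cod (pr1 a)) = fob p2 (cod (pr2 a)).
Proof. rewrite <- !far_cod, pr_eq; reflexivity. Qed.

Lemma far_id_fibre (x : pb_ob) : far p1 (idA (pr1 x)) = far p2 (idA (pr2 x)).
Proof. rewrite !far_id, pr_eq; reflexivity. Qed.

Definition pb_composable (a b : pb_ar) : Prop :=
  cod (pr1 a) = dom (pr1 b) /\ cod (pr2 a) = dom (pr2 b).

Lemma far_comp_fibre (a b : pb_ar) : pb_composable a b ->
  far p1 (comp (pr1 a) (pr1 b)) = far p2 (comp (pr2 a) (pr2 b)).
Proof. intros [E1 E2]; rewrite !far_comp, !pr_eq by assumption; reflexivity. Qed.

Definition pb_dom (a : pb_ar) : pb_ob := Fibre _ _ (far_dom_fibre a).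
Definition pb_cod (a : pb_ar) : pb_ob := Fibre _ _ (far_cod_fibre a).
Definition pb_id (x : pb_ob) : pb_ar := Fibre _ _ (far_id_fibre x).

(* Off composable pairs the value is junk: [Category] only constrains [comp]
   on composable arrows. *)
Definition pb_comp (a b : pb_ar) : pb_ar :=
  match excluded_middle_informative (pb_composable a b) with
  | left h => Fibre _ _ (far_comp_fibre h)
  | right _ => a
  end.

Lemma pb_cod_dom (a b : pb_ar) : pb_cod a = pb_dom b <-> pb_composable a b.
Proof.
  split.
  - intros H; split; [apply (f_equal pr1 H) | apply (f_equal pr2 H)].
  - intros [E1 E2]; apply fibre_ext; assumption.
Qed.

Lemma pr1_pb_comp (a b : pb_ar) : pb_composable a b ->
  pr1 (pb_comp a b) = comp (pr1 a) (pr1 b).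
Proof.
  intros h; unfold pb_comp; destruct excluded_middle_informative; [reflexivity | contradiction].
Qed.

Lemma pr2_pb_comp (a b : pb_ar) : pb_composable a b ->
  pr2 (pb_comp a b) = comp (pr2 a) (pr2 b).
Proof.
  intros h; unfold pb_comp; destruct excluded_middle_informative; [reflexivity | contradiction].
Qed.

Definition pullback_category : Category.
Proof.
  refine (@Build_Category pb_ob pb_ar pb_dom pb_cod pb_id pb_comp _ _ _ _ _ _ _).
  - intros x; apply fibre_ext; apply dom_id.
  - intros x; apply fibre_ext; apply cod_id.
  - intros a b H%pb_cod_dom; apply fibre_ext; simpl;
      [rewrite (pr1_pb_comp H) | rewrite (pr2_pb_comp H)]; apply dom_comp, H.
  - intros a b H%pb_cod_dom; apply fibre_ext; simpl;
      [rewrite (pr1_pb_comp H) | rewrite (pr2_pb_comp H)]; apply cod_comp, H.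
  - intros a; assert (H : pb_composable (pb_id (pb_dom a)) a) by (split; apply cod_id).
    apply fibre_ext; [rewrite (pr1_pb_comp H) | rewrite (pr2_pb_comp H)]; apply comp_id_l.
  - intros a; assert (H : pb_composable a (pb_id (pb_cod a))) by (split; symmetry; apply dom_id).
    apply fibre_ext; [rewrite (pr1_pb_comp H) | rewrite (pr2_pb_comp H)]; apply comp_id_r.
  - intros a b c Hab%pb_cod_dom Hbc%pb_cod_dom.
    assert (Hab_c : pb_composable (pb_comp a b) c).
    { split; [rewrite (pr1_pb_comp Hab) | rewrite (pr2_pb_comp Hab)];
        rewrite cod_comp; unfold pb_composable in *; tauto. }
    assert (Ha_bc : pb_composable a (pb_comp b c)).
    { split; [rewrite (pr1_pb_comp Hbc) | rewrite (pr2_pb_comp Hbc)];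
        rewrite dom_comp; unfold pb_composable in *; tauto. }
    apply fibre_ext.
    + rewrite (pr1_pb_comp Hab_c), (pr1_pb_comp Ha_bc), (pr1_pb_comp Hab),
        (pr1_pb_comp Hbc).
      apply comp_assoc; [apply Hab | apply Hbc].
    + rewrite (pr2_pb_comp Hab_c), (pr2_pb_comp Ha_bc), (pr2_pb_comp Hab),
        (pr2_pb_comp Hbc).
      apply comp_assoc; [apply Hab | apply Hbc].
Defined.

Definition pullback_functor : Functor pullback_category C.
Proof.
  refine (@Build_Functor pullback_category C
            (fun x : pb_ob => fob p1 (pr1 x)) (fun a : pb_ar => far p1 (pr1 a)) _ _ _ _).
  - intros a; apply far_dom.
  - intros a; apply far_cod.
  - intros x; apply far_id.
  - intros a b H%pb_cod_dom; simpl; rewrite (pr1_pb_comp H); apply far_comp, H.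
Defined.

Lemma pullback_functor_ULF : ULF p1 -> ULF p2 -> ULF pullback_functor.
Proof.
  intros U1 U2 a u v Huv Ha; simpl in Ha.
  destruct (U1 (pr1 a) u v Huv Ha) as [[b1 c1] [[Hbc1 [Ea1 [Eb1 Ec1]]] uniq1]].
  assert (Ha2 : far p2 (pr2 a) = comp u v) by (rewrite <- pr_eq; exact Ha).
  destruct (U2 (pr2 a) u v Huv Ha2) as [[b2 c2] [[Hbc2 [Ea2 [Eb2 Ec2]]] uniq2]].
  simpl in *.
  assert (hb : far p1 b1 = far p2 b2) by congruence.
  assert (hc : far p1 c1 = far p2 c2) by congruence.
  assert (Hbc : pb_composable (Fibre _ _ hb) (Fibre _ _ hc)) by (split; assumption).
  exists (Fibre _ _ hb, Fibre _ _ hc); split.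
  - split; [apply pb_cod_dom, Hbc |]; split; [| split; assumption].
    apply fibre_ext; simpl; [rewrite (pr1_pb_comp Hbc) | rewrite (pr2_pb_comp Hbc)]; assumption.
  - intros [b c]; simpl; intros [Hbc'%pb_cod_dom [Ea' [Eb' Ec']]].
    assert (Ea1' : pr1 a = comp (pr1 b) (pr1 c)) by (rewrite Ea', (pr1_pb_comp Hbc'); auto).
    assert (Ea2' : pr2 a = comp (pr2 b) (pr2 c)) by (rewrite Ea', (pr2_pb_comp Hbc'); auto).
    assert (E1 : (b1, c1) = (pr1 b, pr1 c)) by (apply uniq1; simpl; split; [apply Hbc' | auto]).
    assert (E2 : (b2, c2) = (pr2 b, pr2 c)).
    { apply uniq2; simpl; split; [apply Hbc' | rewrite <- !pr_eq; auto]. }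
    injection E1; injection E2; intros; f_equal; apply fibre_ext; simpl; assumption.
Qed.

Lemma pullback_functor_finitary : finitary p1 -> finitary p2 -> finitary pullback_functor.
Proof.
  intros [Ob1 Ar1] [Ob2 Ar2]; split.
  - intros x; apply finite_fibre; auto.
  - intros f; apply finite_fibre; auto.
Qed.

End PullbackCategory.

Section ProductCatAutomaton.
Variables (C : Category) (M1 M2 : cat_automaton C).
Hypothesis (h0 : fob (ap M1) (aq0 M1) = fob (ap M2) (aq0 M2)).
Hypothesis (hf : fob (ap M1) (aqf M1) = fob (ap M2) (aqf M2)).

Definition cat_automaton_prod : cat_automaton C :=
  {| aQ := pullback_category (ap M1) (ap M2);
     ap := pullback_functor (ap M1) (ap M2);
     ap_ulf := pullback_functor_ULF (@ap_ulf _ M1) (@ap_ulf _ M2);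
     ap_fin := pullback_functor_finitary (@ap_fin _ M1) (@ap_fin _ M2);
     aq0 := Fibre _ _ h0;
     aqf := Fibre _ _ hf |}.

Lemma cat_recognizes_prod (f : Ar C) :
  cat_recognizes cat_automaton_prod f <-> cat_recognizes M1 f /\ cat_recognizes M2 f.
Proof.
  unfold cat_recognizes; simpl; split.
  - intros [a [Da [Ca Fa]]].
    split; [exists (pr1 a) | exists (pr2 a)]; repeat split.
    + apply (f_equal pr1 Da).
    + apply (f_equal pr1 Ca).
    + assumption.
    + apply (f_equal pr2 Da).
    + apply (f_equal pr2 Ca).
    + rewrite <- pr_eq; assumption.
  - intros [[a1 [D1 [C1 F1]]] [a2 [D2 [C2 F2]]]].
    assert (ha : far (ap M1) a1 = far (ap M2) a2) by congruence.
    exists (Fibre _ _ ha); repeat split; try apply fibre_ext; assumption.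
Qed.

End ProductCatAutomaton.

Lemma regular_arrows_and (C : Category) (A B : Ob C) (L1 L2 : Ar C -> Prop) :
  regular_arrows A B L1 -> regular_arrows A B L2 ->
  regular_arrows A B (fun f => L1 f /\ L2 f).
Proof.
  intros [M1 [HA1 [HB1 HL1]]] [M2 [HA2 [HB2 HL2]]].
  assert (h0 : fob (ap M1) (aq0 M1) = fob (ap M2) (aq0 M2)) by congruence.
  assert (hf : fob (ap M1) (aqf M1) = fob (ap M2) (aqf M2)) by congruence.
  exists (cat_automaton_prod M1 M2 h0 hf); split; [assumption | split; [assumption |]].
  intros f; rewrite cat_recognizes_prod, <- HL1, <- HL2; reflexivity.
Qed.

Section OperadComposable.
Variable O : Operad.

Lemma ocomposable_lt_length (g : Op O) i h : ocomposable g i h -> i < length (ins g).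
Proof. intros H; apply nth_error_Some; unfold ocomposable, ocomposable_gen in H; congruence. Qed.

Lemma ocomposable_assoc_seq_l (g h k : Op O) i j :
  ocomposable g i h -> ocomposable h j k -> ocomposable (ocomp g i h) (i + j) k.
Proof.
  intros Hgh Hhk; pose proof (ocomposable_lt_length Hgh); pose proof (ocomposable_lt_length Hhk).
  unfold ocomposable, ocomposable_gen; rewrite ins_comp by exact Hgh.
  rewrite nth_error_app2, firstn_length_le by (rewrite ?firstn_length_le; lia).
  rewrite nth_error_app1 by lia.
  replace (i + j - i) with j by lia; exact Hhk.
Qed.

Lemma ocomposable_assoc_seq_r (g h k : Op O) i j :
  ocomposable g i h -> ocomposable h j k -> ocomposable g i (ocomp h j k).
Proof. intros Hgh Hhk; unfold ocomposable, ocomposable_gen; rewrite out_comp; assumption. Qed.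

Lemma ocomposable_assoc_par_l (g h k : Op O) i j : i < j ->
  ocomposable g i h -> ocomposable g j k -> ocomposable (ocomp g j k) i h.
Proof.
  intros Hij Hgh Hgk; pose proof (ocomposable_lt_length Hgk).
  unfold ocomposable, ocomposable_gen; rewrite ins_comp by exact Hgk.
  rewrite nth_error_app1 by (rewrite firstn_length_le; lia).
  rewrite nth_error_firstn; destruct (Nat.ltb_spec i j); [exact Hgh | lia].
Qed.

Lemma ocomposable_assoc_par_r (g h k : Op O) i j : i < j ->
  ocomposable g i h -> ocomposable g j k ->
  ocomposable (ocomp g i h) (j - 1 + length (ins h)) k.
Proof.
  intros Hij Hgh Hgk; pose proof (ocomposable_lt_length Hgk).
  unfold ocomposable, ocomposable_gen; rewrite ins_comp by exact Hgh.
  rewrite nth_error_app2, firstn_length_le by (rewrite ?firstn_length_le; lia).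
  rewrite nth_error_app2, nth_error_skipn by lia.
  replace (S i + (j - 1 + length (ins h) - i - length (ins h))) with j by lia; exact Hgk.
Qed.

End OperadComposable.

Section PullbackOperad.
Variables (O Q1 Q2 : Operad) (p1 : OFunctor Q1 O) (p2 : OFunctor Q2 O).

Local Notation pb_col := (fibre (fcol p1) (fcol p2)).
Local Notation pb_op := (fibre (fop p1) (fop p2)).

Lemma fop_out_fibre (a : pb_op) : fcol p1 (out (pr1 a)) = fcol p2 (out (pr2 a)).
Proof. rewrite <- !fop_out, pr_eq; reflexivity. Qed.

Lemma fop_ins_fibre (a : pb_op) : map (fcol p1) (ins (pr1 a)) = map (fcol p2) (ins (pr2 a)).
Proof. rewrite <- !fop_ins, pr_eq; reflexivity. Qed.

Lemma fop_id_fibre (c : pb_col) : fop p1 (oid (pr1 c)) = fop p2 (oid (pr2 c)).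
Proof. rewrite !fop_id, pr_eq; reflexivity. Qed.

Definition pb_ocomposable (g : pb_op) (i : nat) (h : pb_op) : Prop :=
  ocomposable (pr1 g) i (pr1 h) /\ ocomposable (pr2 g) i (pr2 h).

Lemma fop_comp_fibre g i h : pb_ocomposable g i h ->
  fop p1 (ocomp (pr1 g) i (pr1 h)) = fop p2 (ocomp (pr2 g) i (pr2 h)).
Proof. intros [E1 E2]; rewrite !fop_comp, !pr_eq by assumption; reflexivity. Qed.

Definition pb_out (a : pb_op) : pb_col := Fibre _ _ (fop_out_fibre a).

(* All pairs of the [combine] lie in the fibre ([fop_ins_fibre]); the sieve
   only changes their type. *)
Definition pb_ins (a : pb_op) : list pb_col :=
  sieve (fcol p1) (fcol p2) (combine (ins (pr1 a)) (ins (pr2 a))).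

Definition pb_oid (c : pb_col) : pb_op := Fibre _ _ (fop_id_fibre c).

Definition pb_ocomp (g : pb_op) (i : nat) (h : pb_op) : pb_op :=
  match excluded_middle_informative (pb_ocomposable g i h) with
  | left e => Fibre _ _ (fop_comp_fibre e)
  | right _ => g
  end.

Lemma pr1_pb_ocomp g i h : pb_ocomposable g i h ->
  pr1 (pb_ocomp g i h) = ocomp (pr1 g) i (pr1 h).
Proof.
  intros e; unfold pb_ocomp; destruct excluded_middle_informative; [reflexivity | contradiction].
Qed.

Lemma pr2_pb_ocomp g i h : pb_ocomposable g i h ->
  pr2 (pb_ocomp g i h) = ocomp (pr2 g) i (pr2 h).
Proof.
  intros e; unfold pb_ocomp; destruct excluded_middle_informative; [reflexivity | contradiction].
Qed.

Lemma map_fibre_pair_pb_ins (a : pb_op) :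
  map fibre_pair (pb_ins a) = combine (ins (pr1 a)) (ins (pr2 a)).
Proof. apply map_fibre_pair_sieve_combine, fop_ins_fibre. Qed.

Lemma length_ins_fibre (a : pb_op) : length (ins (pr1 a)) = length (ins (pr2 a)).
Proof. rewrite <- (length_map (fcol p1)), fop_ins_fibre, length_map; reflexivity. Qed.

Lemma length_pb_ins (a : pb_op) : length (pb_ins a) = length (ins (pr1 a)).
Proof.
  rewrite <- (length_map fibre_pair), map_fibre_pair_pb_ins, length_combine,
    length_ins_fibre; apply Nat.min_id.
Qed.

Lemma map_pr1_pb_ins (a : pb_op) : map pr1 (pb_ins a) = ins (pr1 a).
Proof.
  rewrite map_pr1_fibre_pair, map_fibre_pair_pb_ins; apply map_fst_combine, length_ins_fibre.
Qed.

Lemma nth_error_pb_ins (a : pb_op) i (c : pb_col) :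
  nth_error (pb_ins a) i = Some c <->
  nth_error (ins (pr1 a)) i = Some (pr1 c) /\ nth_error (ins (pr2 a)) i = Some (pr2 c).
Proof.
  rewrite <- nth_error_map_fibre_pair, map_fibre_pair_pb_ins; apply nth_error_combine.
Qed.

Lemma pb_ocomposable_iff g i h : ocomposable_gen pb_out pb_ins g i h <-> pb_ocomposable g i h.
Proof. apply nth_error_pb_ins. Qed.

Lemma pb_ins_nil (a : pb_op) : pb_ins a = [] <-> ins (pr1 a) = [] /\ ins (pr2 a) = [].
Proof.
  rewrite <- !length_zero_iff_nil, length_pb_ins, <- length_ins_fibre; tauto.
Qed.

Definition pullback_operad : Operad.
Proof.
  refine (@Build_Operad pb_col pb_op pb_out pb_ins pb_oid pb_ocomp _ _ _ _ _ _ _ _).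
  - intros c; apply fibre_ext; apply out_id.
  - intros c; apply map_fibre_pair_inj; rewrite map_fibre_pair_pb_ins; simpl.
    rewrite !ins_id; reflexivity.
  - intros g i h H%pb_ocomposable_iff; apply fibre_ext; simpl.
    + rewrite (pr1_pb_ocomp H); apply out_comp, H.
    + rewrite (pr2_pb_ocomp H); apply out_comp, H.
  - intros g i h H%pb_ocomposable_iff; apply map_fibre_pair_inj.
    rewrite !map_app, <- firstn_map, <- skipn_map, !map_fibre_pair_pb_ins.
    rewrite (pr1_pb_ocomp H), (pr2_pb_ocomp H), !ins_comp by apply H.
    rewrite combine_firstn, combine_skipn, !combine_app;
      [reflexivity | apply length_ins_fibre |].
    rewrite !length_firstn, length_ins_fibre; reflexivity.
  - intros h; assert (H : pb_ocomposable (pb_oid (pb_out h)) 0 h).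
    { split; unfold ocomposable, ocomposable_gen; simpl; rewrite ins_id; reflexivity. }
    apply fibre_ext; [rewrite (pr1_pb_ocomp H) | rewrite (pr2_pb_ocomp H)]; apply ocomp_id_l.
  - intros g i c Hc%nth_error_pb_ins.
    assert (H : pb_ocomposable g i (pb_oid c)).
    { split; unfold ocomposable, ocomposable_gen; simpl; rewrite out_id; apply Hc. }
    apply fibre_ext; [rewrite (pr1_pb_ocomp H) | rewrite (pr2_pb_ocomp H)];
      apply ocomp_id_r, Hc.
  - intros g i h j k Hgh%pb_ocomposable_iff Hhk%pb_ocomposable_iff.
    assert (Hgh_k : pb_ocomposable (pb_ocomp g i h) (i + j) k).
    { split; [rewrite (pr1_pb_ocomp Hgh) | rewrite (pr2_pb_ocomp Hgh)];
        apply ocomposable_assoc_seq_l; apply Hgh || apply Hhk. }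
    assert (Hg_hk : pb_ocomposable g i (pb_ocomp h j k)).
    { split; [rewrite (pr1_pb_ocomp Hhk) | rewrite (pr2_pb_ocomp Hhk)];
        apply (ocomposable_assoc_seq_r (j := j)); apply Hgh || apply Hhk. }
    apply fibre_ext.
    + rewrite (pr1_pb_ocomp Hgh_k), (pr1_pb_ocomp Hg_hk), (pr1_pb_ocomp Hgh),
        (pr1_pb_ocomp Hhk).
      apply ocomp_assoc_seq; [apply Hgh | apply Hhk].
    + rewrite (pr2_pb_ocomp Hgh_k), (pr2_pb_ocomp Hg_hk), (pr2_pb_ocomp Hgh),
        (pr2_pb_ocomp Hhk).
      apply ocomp_assoc_seq; [apply Hgh | apply Hhk].
  - intros g i h j k Hij Hgh%pb_ocomposable_iff Hgk%pb_ocomposable_iff.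
    rewrite length_pb_ins.
    assert (Hgk_h : pb_ocomposable (pb_ocomp g j k) i h).
    { split; [rewrite (pr1_pb_ocomp Hgk) | rewrite (pr2_pb_ocomp Hgk)];
        apply ocomposable_assoc_par_l; auto; apply Hgh || apply Hgk. }
    assert (Hgh_k : pb_ocomposable (pb_ocomp g i h) (j - 1 + length (ins (pr1 h))) k).
    { split; [rewrite (pr1_pb_ocomp Hgh) | rewrite (pr2_pb_ocomp Hgh), length_ins_fibre];
        apply ocomposable_assoc_par_r; auto; apply Hgh || apply Hgk. }
    apply fibre_ext.
    + rewrite (pr1_pb_ocomp Hgk_h), (pr1_pb_ocomp Hgh_k), (pr1_pb_ocomp Hgh),
        (pr1_pb_ocomp Hgk).
      apply ocomp_assoc_par; [assumption | apply Hgh | apply Hgk].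
    + rewrite (pr2_pb_ocomp Hgk_h), (pr2_pb_ocomp Hgh_k), (pr2_pb_ocomp Hgh),
        (pr2_pb_ocomp Hgk).
      rewrite length_ins_fibre; apply ocomp_assoc_par; [assumption | apply Hgh | apply Hgk].
Defined.

Definition pullback_ofunctor : OFunctor pullback_operad O.
Proof.
  refine (@Build_OFunctor pullback_operad O
            (fun c : pb_col => fcol p1 (pr1 c)) (fun a : pb_op => fop p1 (pr1 a)) _ _ _ _).
  - intros a; apply fop_out.
  - intros a; simpl; rewrite fop_ins, <- map_pr1_pb_ins, map_map; reflexivity.
  - intros c; apply fop_id.
  - intros g i h H%pb_ocomposable_iff; simpl; rewrite (pr1_pb_ocomp H); apply fop_comp, H.
Defined.

Lemma pullback_ofunctor_ULF : OULF p1 -> OULF p2 -> OULF pullback_ofunctor.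
Proof.
  intros U1 U2 a g h i Hgh Ha; simpl in Ha.
  destruct (U1 (pr1 a) g h i Hgh Ha) as [[b1 c1] [[Hbc1 [Ea1 [Eb1 Ec1]]] uniq1]].
  assert (Ha2 : fop p2 (pr2 a) = ocomp g i h) by (rewrite <- pr_eq; exact Ha).
  destruct (U2 (pr2 a) g h i Hgh Ha2) as [[b2 c2] [[Hbc2 [Ea2 [Eb2 Ec2]]] uniq2]].
  simpl in *.
  assert (hb : fop p1 b1 = fop p2 b2) by congruence.
  assert (hc : fop p1 c1 = fop p2 c2) by congruence.
  assert (Hbc : pb_ocomposable (Fibre _ _ hb) i (Fibre _ _ hc)) by (split; assumption).
  exists (Fibre _ _ hb, Fibre _ _ hc); split.
  - split; [apply pb_ocomposable_iff, Hbc |]; split; [| split; assumption].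
    apply fibre_ext; simpl; [rewrite (pr1_pb_ocomp Hbc) | rewrite (pr2_pb_ocomp Hbc)]; assumption.
  - intros [b c]; simpl; intros [Hbc'%pb_ocomposable_iff [Ea' [Eb' Ec']]].
    assert (Ea1' : pr1 a = ocomp (pr1 b) i (pr1 c)) by (rewrite Ea', (pr1_pb_ocomp Hbc'); auto).
    assert (Ea2' : pr2 a = ocomp (pr2 b) i (pr2 c)) by (rewrite Ea', (pr2_pb_ocomp Hbc'); auto).
    assert (E1 : (b1, c1) = (pr1 b, pr1 c)) by (apply uniq1; simpl; split; [apply Hbc' | auto]).
    assert (E2 : (b2, c2) = (pr2 b, pr2 c)).
    { apply uniq2; simpl; split; [apply Hbc' | rewrite <- !pr_eq; auto]. }
    injection E1; injection E2; intros; f_equal; apply fibre_ext; simpl; assumption.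
Qed.

Lemma pullback_ofunctor_finitary : ofinitary p1 -> ofinitary p2 -> ofinitary pullback_ofunctor.
Proof.
  intros [Col1 Op1] [Col2 Op2]; split.
  - intros c; apply finite_fibre; auto.
  - intros f; apply finite_fibre; auto.
Qed.

End PullbackOperad.

Section ProductOpAutomaton.
Variables (O : Operad) (M1 M2 : op_automaton O).
Hypothesis (hr : fcol (op M1) (oqr M1) = fcol (op M2) (oqr M2)).

Definition op_automaton_prod : op_automaton O :=
  {| oQ := pullback_operad (op M1) (op M2);
     op := pullback_ofunctor (op M1) (op M2);
     op_ulf := pullback_ofunctor_ULF (@op_ulf _ M1) (@op_ulf _ M2);
     op_fin := pullback_ofunctor_finitary (@op_fin _ M1) (@op_fin _ M2);
     oqr := Fibre _ _ hr |}.

Lemma op_recognizes_prod (a : Op O) :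
  op_recognizes op_automaton_prod a <-> op_recognizes M1 a /\ op_recognizes M2 a.
Proof.
  unfold op_recognizes, is_constant; simpl; split.
  - intros [al [[[I1 I2]%pb_ins_nil Ol] Fl]].
    split; [exists (pr1 al) | exists (pr2 al)]; repeat split; try assumption.
    + apply (f_equal pr1 Ol).
    + apply (f_equal pr2 Ol).
    + rewrite <- pr_eq; assumption.
  - intros [[a1 [[I1 O1] F1]] [a2 [[I2 O2] F2]]].
    assert (ha : fop (op M1) a1 = fop (op M2) a2) by congruence.
    exists (Fibre _ _ ha); repeat split.
    + apply pb_ins_nil; split; assumption.
    + apply fibre_ext; assumption.
    + assumption.
Qed.

End ProductOpAutomaton.

Lemma regular_constants_and (O : Operad) (A : Col O) (L1 L2 : Op O -> Prop) :
  regular_constants A L1 -> regular_constants A L2 ->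
  regular_constants A (fun a => L1 a /\ L2 a).
Proof.
  intros [M1 [HA1 HL1]] [M2 [HA2 HL2]].
  assert (hr : fcol (op M1) (oqr M1) = fcol (op M2) (oqr M2)) by congruence.
  exists (op_automaton_prod M1 M2 hr); split; [assumption |].
  intros a; rewrite op_recognizes_prod, <- HL1, <- HL2; reflexivity.
Qed.

Theorem mainTheorem12 :
  (forall (C : Category) (A B : Ob C) (L1 L2 : Ar C -> Prop),
      regular_arrows A B L1 -> regular_arrows A B L2 ->
      regular_arrows A B (fun f => L1 f /\ L2 f)) /\
  (forall (O : Operad) (A : Col O) (L1 L2 : Op O -> Prop),
      regular_constants A L1 -> regular_constants A L2 ->
      regular_constants A (fun a => L1 a /\ L2 a)).
Proof. split; [exact regular_arrows_and | exact regular_constants_and]. Qed.
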